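(* Let $\mathfrak{g}$ be a real nilpotent Lie algebra with a (possibly indefinite) metric whose Ricci operator satisfies $\operatorname{Ric}=\lambda\,\mathrm{id}+D$ with $\lambda\in\mathbb{R}$ and $D$ a derivation of $\mathfrak{g}$. Then $\operatorname{Tr}D^2=-\lambda\operatorname{Tr}D$ and $\operatorname{Tr}\operatorname{Ric}^2=\lambda\operatorname{Tr}\operatorname{Ric}$.
   Context: A metric on a Lie algebra is a nondegenerate symmetric bilinear form, possibly indefinite. The Ricci operator is that of the corresponding left-invariant pseudo-Riemannian metric on the simply connected Lie group, evaluated at the identity. *)

From HB Require Import structures.
From mathcomp Require Import all_boot all_order all_algebra.
From mathcomp Require Import reals.
Set Implicit Arguments. Unset Strict Implicit. Unset Printing Implicit Defensive.
Import Order.TTheory GRing.Theory Num.Theory.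
Local Open Scope ring_scope.

Section LieDefs.
Variables (R : realType) (n : nat).
Notation V := 'rV[R]_n.

Definition is_lie_bracket (br : V -> V -> V) : Prop :=
  [/\ (forall (a : R) (x y z : V), br (a *: x + y) z = a *: br x z + br y z),
      (forall x y : V, br x y = - br y x) &
      (forall x y z : V, br x (br y z) + br y (br z x) + br z (br x y) = 0)].

(* nilpotent: for some k, all iterated brackets [x1,[x2,...,[xk,y]]] vanish,
   i.e. the lower central series term g^(k+1) is zero *)
Definition lie_nilpotent (br : V -> V -> V) : Prop :=
  exists k : nat, forall (xs : seq V) (y : V), size xs = k -> foldr br y xs = 0.

(* metric: nondegenerate symmetric bilinear form, given by its Gram matrix *)
Definition is_metric (G : 'M[R]_n) : Prop := G^T = G /\ G \in unitmx.

Definition ip (G : 'M[R]_n) (u v : V) : R := (u *m G *m v^T) 0 0.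

Definition evec (k : 'I_n) : V := delta_mx 0 k.

(* Levi-Civita connection of the left-invariant metric (Koszul formula):
   2 <nabla_X Y, Z> = <[X,Y],Z> - <[Y,Z],X> + <[Z,X],Y> *)
Definition nabla (br : V -> V -> V) (G : 'M[R]_n) (X Y : V) : V :=
  (2%:R^-1) *: ((\row_k (ip G (br X Y) (evec k) - ip G (br Y (evec k)) X
                        + ip G (br (evec k) X) Y)) *m invmx G).

Definition curv (br : V -> V -> V) (G : 'M[R]_n) (X Y Z : V) : V :=
  nabla br G X (nabla br G Y Z) - nabla br G Y (nabla br G X Z)
  - nabla br G (br X Y) Z.

Definition ric (br : V -> V -> V) (G : 'M[R]_n) (Y Z : V) : R :=
  \sum_i (curv br G (evec i) Y Z) 0 i.

(* Ricci operator: <Ric Y, Z> = ric(Y,Z); acting on row vectors Y |-> Y *m Ric *)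
Definition ricci_op (br : V -> V -> V) (G : 'M[R]_n) : 'M[R]_n :=
  (\matrix_(a, b) ric br G (evec a) (evec b)) *m invmx G.

Definition is_derivation (br : V -> V -> V) (D : 'M[R]_n) : Prop :=
  forall x y : V, br x y *m D = br (x *m D) y + br x (y *m D).

End LieDefs.

From HB Require Import structures.
From mathcomp Require Import all_boot all_order all_algebra.
From mathcomp Require Import reals.
From mathcomp Require Import ring lra.
Set Implicit Arguments. Unset Strict Implicit. Unset Printing Implicit Defensive.
Import Order.TTheory GRing.Theory Num.Theory.
Local Open Scope ring_scope.

(* For nilpotent g, ad x and ad x * ad y are nilpotent, so tr ad = 0 and the Killing
   form vanishes.  Writing A^* for the metric adjoint and J_z for the operator with
   <J_z x, y> = <z, [x, y]>, the Koszul formula then yields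
     ric(Y, Z) = -1/4 (2 tr (ad_Y ad_Z^* ) + tr (J_Y J_Z)).
   Contracting with an arbitrary endomorphism E over dual bases (e_i), (e^i) gives
     tr (Ric E) = 1/4 sum_ij <[e_i, e_j] E - [e_i E, e_j] - [e_i, e_j E], [e^i, e^j]>,
   which vanishes when E is a derivation.  With Ric = lambda + D, this yields
   0 = tr (Ric D) = lambda tr D + tr D^2, and tr Ric^2 = lambda tr Ric + tr (Ric D). *)

Section NilpotentMatrix.
Variables (F : fieldType) (m k : nat) (A : 'M[F]_m).
Hypothesis A_nil : A ^+ k = 0.

Lemma char_poly_nilpotent : char_poly A = 'X^m.
Proof.
pose B := map_mx (@polyC F) A; pose X : 'M[{poly F}]_m := 'X%:M.
have XB : GRing.comm X B by rewrite /GRing.comm -!mulmxE scalar_mxC.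
have Bk : B ^+ k = 0.
  suff -> : B ^+ k = map_mx (@polyC F) (A ^+ k) by rewrite A_nil map_mx0.
  by elim: k => [|j IHj]; rewrite ?map_mx1 // !exprSr IHj -!mulmxE map_mxM.
have Xk : X ^+ k = ('X ^+ k)%:M.
  by elim: k => [|j IHj]; rewrite // !exprSr IHj -mulmxE -scalar_mxM.
have : char_poly A %| ('X - 0%:P) ^+ (k * m).
  rewrite subr0 exprM -det_scalar -Xk -[X ^+ k]subr0 -Bk subrXX_comm // -mulmxE.
  by rewrite det_mulmx dvdp_mulr.
case/dvdp_exp_XsubCP=> j _; rewrite subr0 eqp_monic ?char_poly_monic ?monicXn //.
by move/eqP=> cA; have := size_char_poly A; rewrite cA size_polyXn => -[<-].
Qed.

End NilpotentMatrix.

Lemma mxtrace_nilpotent (F : fieldType) m k (A : 'M[F]_m) : A ^+ k = 0 -> \tr A = 0.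
Proof.
case: m A => [|m] A A_nil; first by rewrite /mxtrace big_ord0.
apply/eqP; rewrite -oppr_eq0 -char_poly_trace // (char_poly_nilpotent A_nil).
by rewrite coefXn eqn_leq ltnn andbF.
Qed.

Lemma linear_for_sum (R : pzRingType) (U : lmodType R) (W : zmodType)
    (s : GRing.Scale.law R W) (f : U -> W) : linear_for s f ->
  forall I (r : seq I) (P : pred I) (E : I -> U),
  f (\sum_(i <- r | P i) E i) = \sum_(i <- r | P i) f (E i).
Proof.
move=> f_lin I r P E.
have f0 : f 0 = 0 by rewrite -[0 in LHS]subr0 (zmod_morphism_linear f_lin) subrr.
exact: (big_morph f (GRing.semilinear_linear f_lin).2 f0).
Qed.

Lemma mul_rV_lin1_linear (K : pzRingType) m p (f : 'rV[K]_m -> 'rV[K]_p) :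
  linear f -> forall u, u *m lin1_mx f = f u.
Proof.
by move=> f_lin; exact: (mul_rV_lin1 (HB.pack f (GRing.isLinear.Build _ _ _ _ f f_lin))).
Qed.

Section MetricLieAlgebra.
Variables (R : realType) (n : nat) (br : 'rV[R]_n -> 'rV[R]_n -> 'rV[R]_n) (G : 'M[R]_n).
Local Notation V := 'rV[R]_n.
Local Notation e := (@evec R n).
Hypothesis br_linear : forall y : V, linear (br^~ y).
Hypothesis br_anti : forall x y : V, br x y = - br y x.
Hypothesis G_sym : G^T = G.
Hypothesis G_unit : G \in unitmx.

Definition edual k : V := e k *m invmx G.

Lemma evecM k (M : 'M[R]_n) j : (e k *m M) 0 j = M k j.
Proof. by rewrite /evec -rowE mxE. Qed.

Lemma mxtrace_evec (M : 'M[R]_n) : \sum_i (e i *m M) 0 i = \tr M.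
Proof. by apply: eq_bigr => i _; rewrite evecM. Qed.

Lemma scalar_row_sum (f : V -> R) : scalar f -> forall v, f v = \sum_i v 0 i * f (e i).
Proof.
move=> f_lin v; rewrite {1}(row_sum_delta v) (linear_for_sum f_lin).
by apply: eq_bigr => i _; rewrite (GRing.scalable_linear f_lin).
Qed.

Lemma br_linearr x : linear (br x).
Proof. by move=> a y z; rewrite [LHS]br_anti br_linear opprD -scalerN -!br_anti. Qed.

Lemma invmx_sym : (invmx G)^T = invmx G.
Proof. by rewrite trmx_inv G_sym. Qed.

Lemma edual_entry k j : edual k 0 j = invmx G k j.
Proof. exact: evecM. Qed.

Lemma edual_sym i j : edual i 0 j = edual j 0 i.
Proof. by rewrite !edual_entry -{1}invmx_sym mxE. Qed.

Lemma ip_sym u v : ip G u v = ip G v u.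
Proof.
rewrite /ip -[LHS]trace_mx11 -mxtrace_tr trace_mx11.
by rewrite !trmx_mul trmxK G_sym mulmxA.
Qed.

Lemma ip_scalarl w : scalar (ip G ^~ w).
Proof. by move=> a u v; rewrite /ip !mulmxDl -!scalemxAl !mxE. Qed.

Lemma ip_scalarr w : scalar (ip G w).
Proof. by move=> a u v; rewrite ip_sym ip_scalarl !(ip_sym w). Qed.

Lemma ip0l w : ip G 0 w = 0.
Proof. by rewrite /ip !mul0mx mxE. Qed.

Lemma ipNl u w : ip G (- u) w = - ip G u w.
Proof. by rewrite /ip !mulNmx mxE. Qed.

Lemma ipNr u w : ip G w (- u) = - ip G w u.
Proof. by rewrite ip_sym ipNl ip_sym. Qed.

Lemma ipBl u v w : ip G (u - v) w = ip G u w - ip G v w.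
Proof. by rewrite /ip !mulmxBl !mxE. Qed.

Lemma ip_evec u k : ip G u (e k) = (u *m G) 0 k.
Proof. by rewrite /ip /evec trmx_delta -colE mxE. Qed.

Lemma ip_edual u k : ip G u (edual k) = u 0 k.
Proof.
rewrite /ip /edual trmx_mul invmx_sym mulmxA -(mulmxA u) mulmxV // mulmx1.
by rewrite /evec trmx_delta -colE mxE.
Qed.

Local Notation biscalar f := (bilinear_for *%R *%R f).

Definition gram_mx (f : V -> V -> R) : 'M[R]_n := \matrix_(a, b) f (e a) (e b).

Section Contraction.
Variable f : V -> V -> R.
Hypothesis f_bil : biscalar f.

Lemma mul_gram_mx x : x *m gram_mx f = \row_c f x (e c).
Proof.
apply/rowP => c; rewrite !mxE (scalar_row_sum (f_bil.1 _) x).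
by apply: eq_bigr => a _; rewrite mxE.
Qed.

Lemma sum_edual_swap : \sum_i f (edual i) (e i) = \sum_i f (e i) (edual i).
Proof.
under eq_bigr do rewrite (scalar_row_sum (f_bil.1 _)).
under [RHS]eq_bigr do rewrite (scalar_row_sum (f_bil.2 _)).
by rewrite exchange_big; apply: eq_bigr => a _; apply: eq_bigr => i _; rewrite edual_sym.
Qed.

Lemma mxtrace_gram_mulmx E :
  \tr (gram_mx f *m invmx G *m E) = \sum_d f (e d *m E) (edual d).
Proof.
rewrite mxtrace_mulC mulmxA -mxtrace_evec; apply: eq_bigr => d _.
rewrite !mulmxA mul_gram_mx mxE (scalar_row_sum (f_bil.2 _) (edual d)).
by apply: eq_bigr => c _; rewrite mxE mulrC edual_sym edual_entry.
Qed.

End Contraction.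

Lemma ip_mx_inj (A B : 'M[R]_n) :
  (forall x y, ip G (x *m A) y = ip G (x *m B) y) -> A = B.
Proof.
move=> AB; apply/row_matrixP => i; rewrite !rowE.
have : e i *m A *m G = e i *m B *m G by apply/rowP => k; rewrite -!ip_evec.
by move/(congr1 (mulmx^~ (invmx G))); rewrite !mulmxK.
Qed.

Definition adjoint (A : 'M[R]_n) := G *m A^T *m invmx G.

Lemma adjointE A : adjoint A *m G = G *m A^T.
Proof. by rewrite mulmxKV. Qed.

Lemma ip_adjoint A u v : ip G (u *m adjoint A) v = ip G u (v *m A).
Proof. by rewrite /ip -(mulmxA u) adjointE trmx_mul !mulmxA. Qed.

Lemma adjoint_linear : linear adjoint.
Proof.
by move=> a A B; rewrite /adjoint linearD linearZ /= mulmxDr mulmxDl -scalemxAr -scalemxAl.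
Qed.

Lemma adjointM A B : adjoint (A *m B) = adjoint B *m adjoint A.
Proof. by rewrite /adjoint trmx_mul !mulmxA mulmxKV. Qed.

Lemma mxtrace_adjoint A : \tr (adjoint A) = \tr A.
Proof. by rewrite /adjoint mxtrace_mulC mulmxA mulVmx // mul1mx mxtrace_tr. Qed.

Lemma mxtrace_adjointMl A B : \tr (adjoint A *m B) = \tr (A *m adjoint B).
Proof.
rewrite /adjoint -mxtrace_tr !trmx_mul trmxK invmx_sym G_sym.
by rewrite [LHS]mxtrace_mulC -!mulmxA [LHS]mxtrace_mulC !mulmxA.
Qed.

Lemma mxtrace_mulC_adjoint A B : \tr (A *m adjoint B) = \tr (B *m adjoint A).
Proof. by rewrite mxtrace_mulC mxtrace_adjointMl. Qed.

Definition ad x := lin1_mx (br x).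

Lemma adE x y : y *m ad x = br x y.
Proof. exact: mul_rV_lin1_linear (br_linearr x) y. Qed.

Lemma ad_linear : linear ad.
Proof. by move=> a x y; apply/matrixP => i j; rewrite !mxE br_linear !mxE. Qed.

Definition jmx z := lin1_mx (fun x => z *m adjoint (ad x)).

Lemma jmxE z x : x *m jmx z = z *m adjoint (ad x).
Proof.
have jlin : linear (fun x => z *m adjoint (ad x)).
  by move=> a x1 x2 /=; rewrite ad_linear adjoint_linear mulmxDr -scalemxAr.
exact: mul_rV_lin1_linear jlin x.
Qed.

Lemma jmx_linear : linear jmx.
Proof.
move=> a x y; apply/matrixP => i j; rewrite !mxE mulr_sumr -big_split /=.
by apply: eq_bigr => k _; rewrite !mxE mulrDl mulrA.
Qed.

Lemma ip_jmx z x y : ip G (x *m jmx z) y = ip G z (br x y).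
Proof. by rewrite jmxE ip_adjoint adE. Qed.

Lemma jmx_entry z i j : jmx z i j = ip G (br (e i) (edual j)) z.
Proof. by rewrite -evecM -ip_edual ip_jmx ip_sym. Qed.

Lemma adjoint_jmx z : adjoint (jmx z) = - jmx z.
Proof.
apply: ip_mx_inj => x y.
by rewrite ip_adjoint mulmxN ipNl ip_sym !ip_jmx br_anti ipNr.
Qed.

Lemma mxtrace_jmx z : \tr (jmx z) = 0.
Proof. by have := mxtrace_adjoint (jmx z); rewrite adjoint_jmx raddfN /= => ?; lra. Qed.

Lemma mxtrace_ad_adjoint x y :
  \tr (ad x *m adjoint (ad y)) = \sum_i ip G (br x (e i)) (br y (edual i)).
Proof.
by rewrite -mxtrace_evec; apply: eq_bigr => i _; rewrite -ip_edual mulmxA ip_adjoint !adE.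
Qed.

Lemma mxtrace_jmxM x y : \tr (jmx x *m jmx y) =
  \sum_i \sum_j ip G (br (e i) (edual j)) x * ip G (br (e j) (edual i)) y.
Proof. by apply: eq_bigr => i _; rewrite mxE; apply: eq_bigr => j _; rewrite !jmx_entry. Qed.

(* [nabla_mx Y] is the matrix of [W |-> nabla_Y W], [nablaT_mx Z] that of [X |-> nabla_X Z]. *)
Definition nabla_mx Y := 2^-1 *: (ad Y - adjoint (ad Y) - jmx Y).
Definition nablaT_mx Z := - 2^-1 *: (ad Z + jmx Z + adjoint (ad Z)).

Lemma nablaE X Y : nabla br G X Y =
  2^-1 *: (Y *m ad X - X *m adjoint (ad Y) - Y *m adjoint (ad X)).
Proof.
rewrite /nabla; congr (_ *: _); set W := (_ - _ - _).
suff -> : \row_k (ip G (br X Y) (e k) - ip G (br Y (e k)) X + ip G (br (e k) X) Y)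
          = W *m G by rewrite mulmxK.
apply/rowP => k; rewrite mxE -ip_evec /W !ipBl !ip_adjoint !adE.
by rewrite (ip_sym X) (ip_sym Y (br X _)) (br_anti (e k)) ipNl.
Qed.

Lemma nabla_mxE Y W : nabla br G Y W = W *m nabla_mx Y.
Proof. by rewrite nablaE -jmxE /nabla_mx -scalemxAr !mulmxBr addrAC. Qed.

Lemma nablaT_mxE X Z : nabla br G X Z = X *m nablaT_mx Z.
Proof.
rewrite nablaE adE br_anti -adE -(jmxE Z X) /nablaT_mx -scalemxAr scaleNr -scalerN.
by congr (_ *: _); rewrite !mulmxDr !opprD addrAC.
Qed.

Lemma nabla_mx_ad Y : nabla_mx Y = ad Y + nablaT_mx Y.
Proof. by apply/matrixP => i j; rewrite !mxE; field. Qed.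

Lemma curvE X Y Z : curv br G X Y Z =
  X *m (nablaT_mx (Y *m nablaT_mx Z) - nablaT_mx Z *m nabla_mx Y + ad Y *m nablaT_mx Z).
Proof.
rewrite /curv (nabla_mxE Y (nabla br G X Z)) !nablaT_mxE (br_anti X) -adE.
by rewrite mulNmx mulmxDr mulmxBr !mulmxA opprK.
Qed.

Lemma ricE Y Z :
  ric br G Y Z = \tr (nablaT_mx (Y *m nablaT_mx Z)) - \tr (nablaT_mx Z *m nablaT_mx Y).
Proof.
rewrite /ric; under eq_bigr do rewrite curvE; rewrite mxtrace_evec.
rewrite !mxtraceD raddfN /= nabla_mx_ad mulmxDr mxtraceD (mxtrace_mulC (ad Y)).
by ring.
Qed.

Definition derivation_defect (E : 'M[R]_n) x y :=
  br x y *m E - br (x *m E) y - br x (y *m E).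

Lemma sum_ip_edual u v E :
  \sum_d ip G u (e d *m E) * ip G v (edual d) = ip G u (v *m E).
Proof.
have lin : scalar (fun w => ip G u (w *m E)).
  by move=> a w1 w2 /=; rewrite mulmxDl -scalemxAl ip_scalarr.
by rewrite (scalar_row_sum lin v); apply: eq_bigr => d _; rewrite ip_edual mulrC.
Qed.

Lemma sum_jmxM_edual E : \sum_d \tr (jmx (e d *m E) *m jmx (edual d)) =
  - \sum_i \sum_j ip G (br (e i) (e j) *m E) (br (edual i) (edual j)).
Proof.
under eq_bigr do rewrite mxtrace_jmxM.
rewrite exchange_big; under eq_bigr do rewrite exchange_big.
under eq_bigr do under eq_bigr do rewrite sum_ip_edual.
rewrite exchange_big -sumrN; apply: eq_bigr => i _.
pose g u v := ip G (br (e i) v *m E) (br u (edual i)).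
have g_bil : biscalar g.
  split=> [v|u] a w1 w2 /=; rewrite /g.
    by rewrite br_linear ip_scalarr.
  by rewrite br_linearr mulmxDl -scalemxAl ip_scalarl.
transitivity (\sum_j g (e j) (edual j)).
  by apply: eq_bigr => j _; rewrite ip_sym.
rewrite -sum_edual_swap // -sumrN; apply: eq_bigr => j _.
by rewrite /g (br_anti (edual j)) ipNr.
Qed.

Lemma sum_br_mulmx_swap E :
  \sum_i \sum_j ip G (br (e i) (e j *m E)) (br (edual i) (edual j)) =
  \sum_i \sum_j ip G (br (e i *m E) (e j)) (br (edual i) (edual j)).
Proof.
rewrite exchange_big; apply: eq_bigr => i _; apply: eq_bigr => j _.
by rewrite br_anti (br_anti (edual j)) ipNl ipNr opprK.
Qed.

Lemma derivation_defect_eq0 D : is_derivation br D -> derivation_defect D =2 (fun _ _ => 0).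
Proof. by move=> D_der x y; rewrite /derivation_defect D_der addrAC addrK subrr. Qed.

Lemma mulmx_adX x k y : y *m ad x ^+ k = foldr br y (nseq k x).
Proof.
elim: k => [|k IHk]; first by rewrite expr0 mulmx1.
by rewrite exprSr -mulmxE mulmxA IHk adE.
Qed.

Lemma mulmx_adMX x x' k y :
  y *m (ad x *m ad x') ^+ k = foldr br y (flatten (nseq k [:: x'; x])).
Proof.
elim: k => [|k IHk]; first by rewrite expr0 mulmx1.
by rewrite exprSr -mulmxE !mulmxA IHk !adE.
Qed.

Lemma lie_nilpotent_ad : lie_nilpotent br ->
  (forall x, \tr (ad x) = 0) /\ (forall x y, \tr (ad x *m ad y) = 0).
Proof.
case=> k br_nil.
have long_eq0 xs y : (k <= size xs)%N -> foldr br y xs = 0.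
  by move=> le_k; rewrite -(cat_take_drop k xs) foldr_cat br_nil // size_takel.
have mx_eq0 (M : 'M[R]_n) : (forall y : 'rV_n, y *m M = 0) -> M = 0.
  by move=> M0; apply/row_matrixP => i; rewrite rowE M0 row0.
split=> [x | x y]; apply: (@mxtrace_nilpotent _ _ k); apply: mx_eq0 => z.
  by rewrite mulmx_adX long_eq0 // size_nseq.
by rewrite mulmx_adMX long_eq0 // size_flatten /shape map_nseq sumn_nseq leq_pmull.
Qed.

Section KillingFree.
Hypothesis mxtrace_ad : forall x, \tr (ad x) = 0.
Hypothesis killing_eq0 : forall x y, \tr (ad x *m ad y) = 0.

Lemma mxtrace_nablaT Z : \tr (nablaT_mx Z) = 0.
Proof.
by rewrite /nablaT_mx mxtraceZ !mxtraceD mxtrace_jmx mxtrace_adjoint mxtrace_ad !addr0 mulr0.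
Qed.

Lemma ric_killing_free Y Z :
  ric br G Y Z = - 4^-1 * (2 * \tr (ad Y *m adjoint (ad Z)) + \tr (jmx Y *m jmx Z)).
Proof.
rewrite ricE mxtrace_nablaT sub0r /nablaT_mx -scalemxAl -scalemxAr !mxtraceZ.
rewrite !mulmxDl !mulmxDr !mxtraceD killing_eq0 -adjointM mxtrace_adjoint killing_eq0.
rewrite [\tr (adjoint (ad Z) *m jmx Y)]mxtrace_adjointMl adjoint_jmx mulmxN raddfN /=.
rewrite -[\tr (jmx Z *m adjoint _)]mxtrace_adjointMl adjoint_jmx mulNmx raddfN /=.
rewrite mxtrace_adjointMl mxtrace_mulC_adjoint (mxtrace_mulC (jmx Y)).
by field.
Qed.

Lemma ric_biscalar : biscalar (ric br G).
Proof.
split=> [Z|Y] a x y /=; rewrite !ric_killing_free.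
  by rewrite ad_linear jmx_linear !mulmxDl -!scalemxAl !mxtraceD !mxtraceZ; ring.
by rewrite ad_linear adjoint_linear jmx_linear !mulmxDr -!scalemxAr !mxtraceD !mxtraceZ; ring.
Qed.

(* Lauret's formula tr (Ric E) = 1/4 <pi(E) mu, mu>, with mu the bracket. *)
Lemma mxtrace_ricci_mulmx E : \tr (ricci_op br G *m E) =
  4^-1 * \sum_i \sum_j ip G (derivation_defect E (e i) (e j)) (br (edual i) (edual j)).
Proof.
rewrite [ricci_op br G]/(gram_mx (ric br G) *m invmx G) (mxtrace_gram_mulmx ric_biscalar).
under eq_bigr do rewrite ric_killing_free mxtrace_ad_adjoint.
rewrite -mulr_sumr big_split /= -mulr_sumr sum_jmxM_edual.
under [in RHS]eq_bigr do under eq_bigr do rewrite /derivation_defect !ipBl.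
under [in RHS]eq_bigr do rewrite !sumrB.
by rewrite !sumrB sum_br_mulmx_swap; ring.
Qed.

End KillingFree.
End MetricLieAlgebra.

Theorem corollary2p2 (R : realType) (n : nat) (br : 'rV[R]_n -> 'rV[R]_n -> 'rV[R]_n)
    (G : 'M[R]_n) (lambda : R) (D : 'M[R]_n) :
  is_lie_bracket br -> lie_nilpotent br -> is_metric G ->
  is_derivation br D ->
  ricci_op br G = lambda%:M + D ->
  \tr (D *m D) = - lambda * \tr D /\
  \tr (ricci_op br G *m ricci_op br G) = lambda * \tr (ricci_op br G).
Proof.
case=> br_lin br_anti _ br_nil [G_sym G_unit] D_der RicE.
have br_linear y : linear (br^~ y) by move=> a x z; exact: br_lin.
have [ad_tr0 killing0] := lie_nilpotent_ad br_linear br_anti br_nil.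
have trRD : \tr (ricci_op br G *m D) = 0.
  rewrite (mxtrace_ricci_mulmx br_linear br_anti G_sym G_unit ad_tr0 killing0).
  rewrite big1 ?mulr0 // => i _; apply: big1 => j _.
  by rewrite derivation_defect_eq0 // ip0l.
split; last by rewrite {2}RicE mulmxDr mul_mx_scalar mxtraceD mxtraceZ trRD addr0.
by move: trRD; rewrite RicE mulmxDl mul_scalar_mx mxtraceD mxtraceZ => ?; lra.
Qed.
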